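(* The one-dimensional subalgebras of ${\rm A}_4$ are exactly $\langle e_1\rangle$, $\langle e_2\rangle$, $\langle e_1-e_2\rangle$, $\langle e_1+e_2\pm \mathrm{i}e_3\rangle$ and $\langle e_1-e_2\pm\mathrm{i}e_3\rangle$. Up to automorphisms of ${\rm A}_4$, every one-dimensional subalgebra is equivalent to one of $\langle e_1\rangle$, $\langle e_2\rangle$, $\langle e_1-e_2\rangle$, $\langle e_1+e_2+\mathrm{i}e_3\rangle$, $\langle e_1-e_2+\mathrm{i}e_3\rangle$.
   Context: ${\rm A}_4$ is the complex algebra with basis $e_1,e_2,e_3$, unit $e_1$ ($e_1e_i=e_ie_1=e_i$), $e_2e_2=e_2$ and $e_3e_3=-e_1+e_2$; all other products of basis elements are zero. $\mathrm{i}=\sqrt{-1}$. A subalgebra is a linear subspace closed under multiplication (it need not contain $e_1$). Equivalence up to automorphisms means one is mapped onto the other by an algebra automorphism. $\langle S\rangle$ denotes linear span. *)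

(* The algebra A_4 over an algebraically closed numeric field
   C (this includes the complex numbers), carrier 'rV[C]_3 with coordinates
   w.r.t. the basis e1, e2, e3. *)
From HB Require Import structures.
From mathcomp Require Import all_boot all_order all_algebra.
Set Implicit Arguments. Unset Strict Implicit. Unset Printing Implicit Defensive.
Import Order.TTheory GRing.Theory Num.Theory.
Local Open Scope ring_scope.

Section A4.
Variable C : numClosedFieldType.

Definition vec3 (a b c : C) : 'rV[C]_3 := \row_(i < 3) nth 0 [:: a; b; c] i.

Definition e1 : 'rV[C]_3 := vec3 1 0 0.
Definition e2 : 'rV[C]_3 := vec3 0 1 0.
Definition e3 : 'rV[C]_3 := vec3 0 0 1.

Definition c1 (x : 'rV[C]_3) : C := x 0 (inord 0).
Definition c2 (x : 'rV[C]_3) : C := x 0 (inord 1).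
Definition c3 (x : 'rV[C]_3) : C := x 0 (inord 2).

(* bilinear extension of: e1 unit, e2 e2 = e2, e3 e3 = -e1 + e2, other
   products of basis elements zero *)
Definition A4mul (x y : 'rV[C]_3) : 'rV[C]_3 :=
  vec3 (c1 x * c1 y - c3 x * c3 y)
       (c1 x * c2 y + c2 x * c1 y + c2 x * c2 y + c3 x * c3 y)
       (c1 x * c3 y + c3 x * c1 y).

Definition is_subalgebra (U : {vspace 'rV[C]_3}) : Prop :=
  forall x y, x \in U -> y \in U -> A4mul x y \in U.

Definition is_automorphism (f : 'rV[C]_3 -> 'rV[C]_3) : Prop :=
  [/\ forall (a : C) x y, f (a *: x + y) = a *: f x + f y,
      bijective f &
      forall x y, f (A4mul x y) = A4mul (f x) (f y)].

Definition maps_onto (f : 'rV[C]_3 -> 'rV[C]_3) (U W : {vspace 'rV[C]_3}) : Prop :=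
  (forall u, u \in U -> f u \in W) /\ (forall w, w \in W -> exists2 u, u \in U & f u = w).

Definition equiv_aut (U W : {vspace 'rV[C]_3}) : Prop :=
  exists f, is_automorphism f /\ maps_onto f U W.

End A4.

From HB Require Import structures.
From mathcomp Require Import all_boot all_order all_algebra.
From mathcomp Require Import ring.
Import Order.TTheory GRing.Theory Num.Theory.
Local Open Scope ring_scope.

(* A line <[y]> is a subalgebra iff y * y = k *: y for some k.  Writing
   y = (a, b, c), the first coordinate gives c = 0 when a = 0, so y spans
   <[e2]>; otherwise y may be normalised to a = 1, and the three coordinate
   equations force k = 1, b \in {0, -1} when c = 0, and k = 2, b = +-1,
   c = +-i when c != 0.  The automorphism e3 |-> -e3 identifies the lines
   differing only in the sign of c. *)

Lemma vlineZ {K : fieldType} {vT : vectType K} (k : K) (y : vT) :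
  k != 0 -> <[k *: y]>%VS = <[y]>%VS.
Proof.
move=> k0; apply/vspaceP => v; apply/vlineP/vlineP => -[t ->].
  by exists (t * k); rewrite scalerA.
by exists (t / k); rewrite scalerA mulfVK.
Qed.

Lemma dimv1_vline {K : fieldType} {vT : vectType K} (U : {vspace vT}) :
  \dim U = 1%N -> exists2 y, y != 0 & U = <[y]>%VS.
Proof.
move=> dimU; have y0 : vpick U != 0 by rewrite vpick0 -dimv_eq0 dimU.
exists (vpick U) => //; apply/eqP.
by rewrite eq_sym eqEdim dim_vline y0 dimU -memvE memv_pick.
Qed.

Section A4.
Context {C : numClosedFieldType}.
Implicit Types (a b c k : C) (x y : 'rV[C]_3) (U : {vspace 'rV[C]_3}).

Lemma c1_vec3 a b c : c1 (vec3 a b c) = a.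
Proof. by rewrite /c1 mxE inordK. Qed.

Lemma c2_vec3 a b c : c2 (vec3 a b c) = b.
Proof. by rewrite /c2 mxE inordK. Qed.

Lemma c3_vec3 a b c : c3 (vec3 a b c) = c.
Proof. by rewrite /c3 mxE inordK. Qed.

Lemma vec3_coord x : vec3 (c1 x) (c2 x) (c3 x) = x.
Proof.
apply/rowP => i; rewrite mxE.
by case: i => [[|[|[|//]]] lt_i3] /=; congr (x 0 _); apply: val_inj; rewrite /= inordK.
Qed.

Lemma vec3_ind (P : 'rV[C]_3 -> Prop) : (forall a b c, P (vec3 a b c)) -> forall x, P x.
Proof. by move=> Pvec3 x; rewrite -(vec3_coord x). Qed.

Lemma vec3_inj a b c a' b' c' :
  vec3 a b c = vec3 a' b' c' -> [/\ a = a', b = b' & c = c'].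
Proof.
move=> eq_abc; split.
- by rewrite -(c1_vec3 a b c) eq_abc c1_vec3.
- by rewrite -(c2_vec3 a b c) eq_abc c2_vec3.
- by rewrite -(c3_vec3 a b c) eq_abc c3_vec3.
Qed.

Lemma vec3_0 : vec3 0 0 0 = 0 :> 'rV[C]_3.
Proof. by apply/rowP => i; rewrite !mxE; case: i => [[|[|[|//]]] ?]. Qed.

Lemma vec3_eq0 a b c : (vec3 a b c == 0) = [&& a == 0, b == 0 & c == 0].
Proof.
by rewrite -vec3_0; apply/eqP/and3P => [/vec3_inj[-> -> ->] | [/eqP-> /eqP-> /eqP->]].
Qed.

Lemma add_vec3 a b c a' b' c' :
  vec3 a b c + vec3 a' b' c' = vec3 (a + a') (b + b') (c + c').
Proof. by apply/rowP => i; rewrite !mxE; case: i => [[|[|[|//]]] ?]. Qed.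

Lemma opp_vec3 a b c : - vec3 a b c = vec3 (- a) (- b) (- c).
Proof. by apply/rowP => i; rewrite !mxE; case: i => [[|[|[|//]]] ?]. Qed.

Lemma scale_vec3 k a b c : k *: vec3 a b c = vec3 (k * a) (k * b) (k * c).
Proof. by apply/rowP => i; rewrite !mxE; case: i => [[|[|[|//]]] ?]. Qed.

Lemma A4mul_vec3 a b c a' b' c' :
  A4mul (vec3 a b c) (vec3 a' b' c') =
  vec3 (a * a' - c * c') (a * b' + b * a' + b * b' + c * c') (a * c' + c * a').
Proof. by rewrite /A4mul !(c1_vec3, c2_vec3, c3_vec3). Qed.

Lemma A4mulZZ s t x y : A4mul (s *: x) (t *: y) = (s * t) *: A4mul x y.
Proof.
elim/vec3_ind: x => a b c; elim/vec3_ind: y => a' b' c'.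
by rewrite (scale_vec3 s) (scale_vec3 t) !A4mul_vec3 scale_vec3; congr vec3; ring.
Qed.

Lemma vline_subalgebraP y : is_subalgebra <[y]>%VS <-> A4mul y y \in <[y]>%VS.
Proof.
split=> [sub_y | /vlineP[k yy]]; first exact: sub_y (memv_line y) (memv_line y).
move=> _ _ /vlineP[s ->] /vlineP[t ->].
by rewrite A4mulZZ yy scalerA memvZ ?memv_line.
Qed.

Definition subalgebra_gens : seq 'rV[C]_3 :=
  [:: vec3 1 0 0; vec3 0 1 0; vec3 1 (-1) 0;
      vec3 1 1 'i; vec3 1 1 (- 'i); vec3 1 (-1) 'i; vec3 1 (-1) (- 'i)].

Lemma vec3_1_sqr_gens b c k :
  A4mul (vec3 1 b c) (vec3 1 b c) = k *: vec3 1 b c -> vec3 1 b c \in subalgebra_gens.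
Proof.
rewrite A4mul_vec3 scale_vec3 => /vec3_inj[eq_e1 eq_e2 eq_e3].
have [c0 | c0] := eqVneq c 0.
  rewrite c0 in eq_e1 eq_e2 *.
  have k1 : k = 1 by transitivity (k * 1); [ring | rewrite -eq_e1; ring].
  have b_b1 : b * (b + 1) = 0.
    transitivity (1 * b + b * 1 + b * b + 0 * 0 - k * b); first by rewrite k1; ring.
    by rewrite eq_e2 subrr.
  move/eqP: b_b1; rewrite mulf_eq0 addr_eq0 => /orP[] /eqP->; by rewrite !inE eqxx ?orbT.
have k2 : k = 2 by apply: (mulIf c0); rewrite -eq_e3; ring.
have cc : c ^+ 2 = 'i ^+ 2.
  by rewrite sqrCi; transitivity (1 * 1 - k * 1); [rewrite -eq_e1 | rewrite k2]; ring.
have bb : b ^+ 2 = 1 ^+ 2.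
  transitivity (k * b - (1 * b + b * 1) - c ^+ 2); first by rewrite -eq_e2; ring.
  by rewrite cc sqrCi k2; ring.
move/eqP: bb; rewrite eqf_sqr => /orP[] /eqP->;
  move/eqP: cc; rewrite eqf_sqr => /orP[] /eqP->; by rewrite !inE eqxx ?orbT.
Qed.

Lemma vline_sqr_gens y : y != 0 -> A4mul y y \in <[y]>%VS ->
  exists2 g, g \in subalgebra_gens & <[y]>%VS = <[g]>%VS.
Proof.
elim/vec3_ind: y => a b c y0 /vlineP[k yy].
have [a0 | a0] := eqVneq a 0.
  move: y0 yy; rewrite a0 A4mul_vec3 scale_vec3 => y0 /vec3_inj[cc _ _].
  move/eqP: cc; rewrite !mulr0 sub0r oppr_eq0 mulf_eq0 orbb => /eqP c0.
  move: y0; rewrite c0 vec3_eq0 !eqxx /= andbT => b0.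
  exists (vec3 0 1 0); first by rewrite !inE eqxx ?orbT.
  by rewrite -(vlineZ _ (vec3 0 1 0) b0) scale_vec3 mulr0 mulr1.
have ya : a^-1 *: vec3 a b c = vec3 1 (b / a) (c / a).
  by rewrite scale_vec3 mulVf // !(mulrC a^-1).
exists (vec3 1 (b / a) (c / a)); last by rewrite -ya vlineZ ?invr_eq0.
apply: (vec3_1_sqr_gens _ _ (k / a)).
by rewrite -ya A4mulZZ yy !scalerA mulrC mulrA.
Qed.

Lemma subalgebra_gens_sqr :
  {in subalgebra_gens, forall g, g != 0 /\ A4mul g g \in <[g]>%VS}.
Proof.
move=> g; rewrite !inE; do ?case/predU1P=> [-> | ]; last move/eqP->.
all: split; first by rewrite vec3_eq0 oner_eq0 ?andbF.
all: apply/vlineP; rewrite A4mul_vec3 ?mulrNN ?mulCii.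
1-3: by exists 1; rewrite scale_vec3; congr vec3; ring.
all: by exists 2; rewrite scale_vec3; congr vec3; ring.
Qed.

Lemma dim1_subalgebraP U :
  \dim U = 1%N /\ is_subalgebra U <-> U \in [seq <[g]>%VS | g <- subalgebra_gens].
Proof.
split=> [[/dimv1_vline[y y0 ->] /vline_subalgebraP yy] | /mapP[g gen_g ->]].
  by have [g gen_g ->] := vline_sqr_gens _ y0 yy; apply: map_f.
have [g0 gg] := subalgebra_gens_sqr _ gen_g.
by split; [rewrite dim_vline g0 | exact/vline_subalgebraP].
Qed.

Definition negate_e3 x : 'rV[C]_3 := vec3 (c1 x) (c2 x) (- c3 x).

Lemma negate_e3_vec3 a b c : negate_e3 (vec3 a b c) = vec3 a b (- c).
Proof. by rewrite /negate_e3 c1_vec3 c2_vec3 c3_vec3. Qed.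

Lemma negate_e3_automorphism : is_automorphism negate_e3.
Proof.
split.
- move=> k; elim/vec3_ind => a b c; elim/vec3_ind => a' b' c'.
  by rewrite scale_vec3 add_vec3 !negate_e3_vec3 scale_vec3 add_vec3; congr vec3; ring.
- by exists negate_e3; elim/vec3_ind => a b c; rewrite !negate_e3_vec3 opprK.
- elim/vec3_ind => a b c; elim/vec3_ind => a' b' c'.
  by rewrite A4mul_vec3 !negate_e3_vec3 A4mul_vec3; congr vec3; ring.
Qed.

Lemma automorphismZ f k x : is_automorphism f -> f (k *: x) = k *: f x.
Proof.
case=> lin_f _ _.
have f0 : f 0 = 0.
  by apply: (addIr (f 0)); rewrite add0r -{1}(scale1r (f 0)) -lin_f scale1r addr0.
by rewrite -[k *: x]addr0 lin_f f0 addr0.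
Qed.

Lemma equiv_aut_vline f y : is_automorphism f -> equiv_aut <[y]>%VS <[f y]>%VS.
Proof.
move=> aut_f; exists f; split=> //; split=> _ /vlineP[k ->].
  by rewrite automorphismZ // memvZ ?memv_line.
by exists (k *: y); rewrite ?memvZ ?memv_line ?automorphismZ.
Qed.

Lemma equiv_aut_refl U : equiv_aut U U.
Proof. by exists id; split; [split=> //; exists id | split=> // w wU; exists w]. Qed.

Definition aut_reps : seq 'rV[C]_3 :=
  [:: vec3 1 0 0; vec3 0 1 0; vec3 1 (-1) 0; vec3 1 1 'i; vec3 1 (-1) 'i].

Lemma subalgebra_gens_aut_reps :
  {in subalgebra_gens, forall g, g \in aut_reps \/ negate_e3 g \in aut_reps}.
Proof.
move=> g; rewrite !inE; do ?case/predU1P=> [-> | ]; last move/eqP->.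
all: rewrite negate_e3_vec3 ?oppr0 ?opprK eqxx ?orbT; by [left | right].
Qed.

End A4.

Theorem mainTheorem10 (C : numClosedFieldType) :
  (forall U : {vspace 'rV[C]_3},
     (\dim U = 1%N /\ is_subalgebra U) <->
     U \in [:: <[e1 C]>%VS; <[e2 C]>%VS; <[e1 C - e2 C]>%VS;
               <[e1 C + e2 C + 'i *: e3 C]>%VS;
               <[e1 C + e2 C - 'i *: e3 C]>%VS;
               <[e1 C - e2 C + 'i *: e3 C]>%VS;
               <[e1 C - e2 C - 'i *: e3 C]>%VS]) /\
  (forall U : {vspace 'rV[C]_3},
     \dim U = 1%N -> is_subalgebra U ->
     exists2 W : {vspace 'rV[C]_3},
       W \in [:: <[e1 C]>%VS; <[e2 C]>%VS; <[e1 C - e2 C]>%VS;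
                 <[e1 C + e2 C + 'i *: e3 C]>%VS;
                 <[e1 C - e2 C + 'i *: e3 C]>%VS] &
       equiv_aut U W).
Proof.
rewrite /e1 /e2 /e3 !(scale_vec3, opp_vec3, add_vec3) !(mulr0, mulr1, oppr0, addr0, add0r).
split=> [U | U dimU subU]; first exact: dim1_subalgebraP.
have /mapP[g gen_g ->] := (dim1_subalgebraP U).1 (conj dimU subU).
have [rep_g | rep_g'] := subalgebra_gens_aut_reps _ gen_g.
  by exists <[g]>%VS; [exact: (map_f _ rep_g) | exact: equiv_aut_refl].
exists <[negate_e3 g]>%VS; first exact: (map_f _ rep_g').
exact/equiv_aut_vline/negate_e3_automorphism.
Qed.
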